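(* Let $\lambda$ be a partition and $\sigma:\operatorname{dg}(\lambda)\to\mathbb{Z}_{>0}$ any filling. For every positive integer $k$, $$\sum_{\substack{u\in\operatorname{dg}(\lambda)\\ \sigma(u)=k\ne\sigma(\mathrm N(u))}} t^{\operatorname{up}(\sigma,u)}=\sum_{\substack{u\in\operatorname{dg}(\lambda)\\ \sigma(u)=k\ne\sigma(\mathrm S(u))}} t^{\operatorname{down}(\sigma,u)}$$ as polynomials in $t$.
   Context: $\operatorname{dg}(\lambda)=\{(r,i):1\le i\le\ell(\lambda),\ 1\le r\le\lambda_i\}$ (row $r$ counted from the bottom, column $i$ from the left). For a cell $u=(r,c)$: $\mathrm S(u)=(r-1,c)$ and $\mathrm N(u)=(r+1,c)$; by convention $\sigma(\mathrm S(u))=\infty$ if $r=1$ and $\sigma(\mathrm N(u))=0$ if $r=\lambda_c$. The lower arm is $\operatorname{arm}(u)=\{(r,j)\in\operatorname{dg}(\lambda):j<c\}\cup\{(r-1,j)\in\operatorname{dg}(\lambda):j>c\}$ and the upper arm is $\operatorname{uarm}(u)=\{(r+1,j)\in\operatorname{dg}(\lambda):j<c\}\cup\{(r,j)\in\operatorname{dg}(\lambda):j>c\}$. Define $\operatorname{down}(\sigma,u)=\#\{y\in\operatorname{arm}(u):\sigma(y)=\sigma(u)\}$ when $\sigma(\mathrm S(u))\ne\sigma(u)$, and $\operatorname{up}(\sigma,u)=\#\{y\in\operatorname{uarm}(u):\sigma(y)=\sigma(u)\}$ when $\sigma(\mathrm N(u))\ne\sigma(u)$ (only these cases occur in the sums).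 *)

From mathcomp Require Import all_boot all_order all_algebra.
Set Implicit Arguments. Unset Strict Implicit. Unset Printing Implicit Defensive.

Definition is_partition (lam : seq nat) : bool :=
  sorted geq lam && all (fun a => 0 < a) lam.

(* height of column c (1-based): lam_c *)
Definition colh (lam : seq nat) (c : nat) : nat := nth 0 lam c.-1.

(* cells are pairs (r, c): row r (from bottom), column c (from left) *)
Definition in_dg (lam : seq nat) (u : nat * nat) : bool :=
  [&& 1 <= u.2 <= size lam & 1 <= u.1 <= colh lam u.2].

Definition dg (lam : seq nat) : seq (nat * nat) :=
  flatten [seq [seq (r, c) | r <- iota 1 (colh lam c)] | c <- iota 1 (size lam)].

Definition in_arm (lam : seq nat) (u y : nat * nat) : bool :=
  in_dg lam y &&
  (((y.1 == u.1) && (y.2 < u.2)) || ((y.1 == u.1.-1) && (u.2 < y.2) && (1 < u.1))).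

Definition in_uarm (lam : seq nat) (u y : nat * nat) : bool :=
  in_dg lam y &&
  (((y.1 == u.1.+1) && (y.2 < u.2)) || ((y.1 == u.1) && (u.2 < y.2))).

Definition down (lam : seq nat) (sigma : nat * nat -> nat) (u : nat * nat) : nat :=
  count (fun y => in_arm lam u y && (sigma y == sigma u)) (dg lam).

Definition up (lam : seq nat) (sigma : nat * nat -> nat) (u : nat * nat) : nat :=
  count (fun y => in_uarm lam u y && (sigma y == sigma u)) (dg lam).

(* sigma(u) != sigma(N(u)), with the convention sigma(N(u)) = 0 when r = lam_c
   (sigma takes positive values on the diagram, so this is automatic then). *)
Definition neqN (lam : seq nat) (sigma : nat * nat -> nat) (u : nat * nat) : bool :=
  (u.1 == colh lam u.2) || (sigma (u.1.+1, u.2) != sigma u).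

(* sigma(u) != sigma(S(u)), with the convention sigma(S(u)) = infinity when r = 1. *)
Definition neqS (sigma : nat * nat -> nat) (u : nat * nat) : bool :=
  (u.1 == 1) || (sigma (u.1.-1, u.2) != sigma u).

From mathcomp Require Import all_boot all_order all_algebra.
From mathcomp Require Import zify.
Import GRing.Theory.

(* Only the cells filled with k matter, and they are organised by rows. For
   such a cell in row j, up counts the k-cells of row j+1 to its left plus
   those of row j to its right, and down counts those of row j to its left
   plus those of row j-1 to its right; both are the statistic [arm_count] of
   a pair of adjacent rows. Hence the left side is a sum over the pairs
   (j, j+1) of the cells of row j uncovered by row j+1, and the right side the
   same sum over the cells of row j+1 uncovered by row j. For one pair of rows
   with a and b k-cells the two contributions differ by [a]_t - [b]_t, where
   [n]_t = 1 + t + ... + t^(n-1) is [geom_poly n] ([two_rows_identity], by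
   induction on the columns), and these differences telescope to 0 because
   row 0 and the rows above the diagram are empty. *)

Definition arm_count (lo hi : pred nat) (s : seq nat) (c : nat) : nat :=
  (count (fun d => hi d && (d < c)) s + count (fun d => lo d && (c < d)) s)%N.

Lemma arm_count_cons_head lo hi x s : all (ltn x) s ->
  arm_count lo hi (x :: s) x = count lo s.
Proof.
move=> /allP xs; rewrite /arm_count /= ltnn !andbF !add0n.
rewrite (eq_in_count (a2 := pred0)) ?count_pred0 => [|d /xs /= xd]; last first.
  by rewrite ltnNge ltnW ?andbF.
by apply: eq_in_count => d /xs /= ->; rewrite andbT.
Qed.

Lemma arm_count_cons lo hi x s c : x < c ->
  arm_count lo hi (x :: s) c = (hi x + arm_count lo hi s c)%N.
Proof.
move=> xc; rewrite /arm_count /= xc ltnNge ltnW // andbT andbF; lia.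
Qed.

Section TwoRows.
Variable R : nzSemiRingType.
Local Open Scope ring_scope.

Definition geom_poly (n : nat) : {poly R} := \sum_(i < n) 'X^i.

Lemma geom_polySl n : geom_poly n.+1 = 1 + 'X * geom_poly n.
Proof.
rewrite /geom_poly big_ord_recl big_distrr; congr (_ + _).
by apply: eq_bigr => i _; rewrite exprS.
Qed.

Lemma geom_polySr n : geom_poly n.+1 = geom_poly n + 'X^n.
Proof. by rewrite /geom_poly big_ord_recr. Qed.

Lemma two_rows_identity (lo hi : pred nat) (s : seq nat) : sorted ltn s ->
  \sum_(c <- s | lo c && ~~ hi c) 'X^(arm_count lo hi s c) + geom_poly (count hi s)
  = \sum_(c <- s | hi c && ~~ lo c) 'X^(arm_count lo hi s c) + geom_poly (count lo s).
Proof.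
elim: s => [|x s IH] /=; first by rewrite !big_nil.
rewrite path_sortedE; last exact: ltn_trans.
move=> /andP[xs /IH {}IH].
have shift (P : pred nat) : \sum_(c <- s | P c) 'X^(arm_count lo hi (x :: s) c)
    = 'X^(hi x) * \sum_(c <- s | P c) 'X^(arm_count lo hi s c) :> {poly R}.
  rewrite mulr_sumr big_seq_cond [RHS]big_seq_cond; apply: eq_bigr => c /andP[cs _].
  by rewrite arm_count_cons ?exprD //; exact: (allP xs).
rewrite !big_cons !shift !arm_count_cons_head //.
move: IH; case: (lo x); case: (hi x) => /= IH; rewrite ?expr1 ?expr0 ?mul1r ?add0n ?add1n.
- by rewrite !geom_polySl addrCA [RHS]addrCA -!mulrDr IH.
- by rewrite geom_polySr -addrA IH addrCA [_ + 'X^_]addrC.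
- rewrite addrAC [X in _ = X + _]addrC -geom_polySr !geom_polySl.
  by rewrite addrCA -mulrDr IH mulrDr addrA addrAC.
- exact: IH.
Qed.

Lemma geom_poly0 : geom_poly 0 = 0.
Proof. by rewrite /geom_poly big_ord0. Qed.

Lemma rows_telescope (row : nat -> pred nat) (s : seq nat) n :
  sorted ltn s -> row 0%N =1 pred0 -> row n =1 pred0 ->
  \sum_(0 <= j < n.+1) \sum_(c <- s | row j c && ~~ row j.+1 c)
      'X^(arm_count (row j) (row j.+1) s c)
  = \sum_(0 <= j < n.+1) \sum_(c <- s | row j c && ~~ row j.-1 c)
      'X^(arm_count (row j.-1) (row j) s c) :> {poly R}.
Proof.
move=> s_sorted row0 rown.
pose cnt j := count (row j) s.
have cnt0 j : row j =1 pred0 -> cnt j = 0%N by rewrite /cnt => /eq_count->; apply: count_pred0.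
have partial m :
    \sum_(0 <= j < m) \sum_(c <- s | row j c && ~~ row j.+1 c)
        'X^(arm_count (row j) (row j.+1) s c) + geom_poly (cnt m)
    = \sum_(0 <= j < m) \sum_(c <- s | row j.+1 c && ~~ row j c)
        'X^(arm_count (row j) (row j.+1) s c) + geom_poly (cnt 0%N) :> {poly R}.
  elim: m => [|m IH]; first by rewrite !big_geq.
  rewrite !big_nat_recr //= -addrA two_rows_identity // addrCA IH.
  by rewrite addrCA addrA.
have := partial n; rewrite !cnt0 // geom_poly0 !addr0 => sums.
rewrite big_nat_recr // [RHS]big_nat_recl //= sums big_pred0 => [|c]; last by rewrite rown.
by rewrite [X in _ = X + _]big_pred0 ?addr0 ?add0r // => c; rewrite row0.
Qed.
End TwoRows.

Lemma big_nat_widen_id {R : Type} {idx : R} {op : Monoid.law idx} m n m' n' F :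
  m' <= m <= n -> n <= n' -> (forall i, ~~ (m <= i < n) -> F i = idx) ->
  \big[op/idx]_(m <= i < n) F i = \big[op/idx]_(m' <= i < n') F i.
Proof.
move=> /andP[m'm mn] nn' F0.
rewrite (big_cat_nat m'm (leq_trans mn nn')) (big_cat_nat mn nn') /=.
have out p q : q <= m \/ n <= p -> \big[op/idx]_(p <= i < q) F i = idx.
  by move=> pq; rewrite big_nat_cond big1 // => i; rewrite andbT => ?; apply: F0; lia.
rewrite [X in op X _]out ?Monoid.mul1m; last by left.
by rewrite [X in op _ X]out ?Monoid.mulm1 //; right.
Qed.

Lemma colh_le_sumn lam c : colh lam c <= sumn lam.
Proof.
rewrite /colh; elim: lam c.-1 => [|a l IH] [|i] //=; first exact: leq_addr.
exact: leq_trans (IH i) (leq_addl _ _).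
Qed.

Lemma iota1_index_iota n : iota 1 n = index_iota 1 n.+1.
Proof. by rewrite /index_iota subn1. Qed.

Lemma big_dg {R : Type} {idx : R} {op : Monoid.com_law idx} lam
    (P : pred (nat * nat)) (F : nat * nat -> R) N M :
  sumn lam < N -> size lam < M ->
  \big[op/idx]_(u <- dg lam | P u) F u =
  \big[op/idx]_(0 <= r < N) \big[op/idx]_(0 <= c < M | in_dg lam (r, c) && P (r, c)) F (r, c).
Proof.
move=> ltN ltM; rewrite [RHS](eq_bigr _ (fun r _ => big_mkcond _ _)) exchange_big /=.
rewrite -(big_nat_widen_id 1 (size lam).+1 0 M) ?ltM // => [|c]; last first.
  by rewrite ltnS => cs; rewrite big1 // => r _; rewrite /in_dg /= (negbTE cs).
rewrite /dg big_flatten big_map iota1_index_iota; apply: eq_big_nat => c cs.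
rewrite big_map big_mkcond iota1_index_iota.
have ltcN : colh lam c < N := leq_ltn_trans (colh_le_sumn lam c) ltN.
rewrite -(big_nat_widen_id 1 (colh lam c).+1 0 N) // => [|r].
  apply: eq_big_nat => r; rewrite ltnS => rc.
  by move: cs; rewrite ltnS /in_dg /= => -> /=; rewrite rc.
by rewrite ltnS => rc; rewrite /in_dg /= (negbTE rc) andbF.
Qed.

Lemma count_dg_row lam (P : pred (nat * nat)) j M :
  (forall u, P u -> in_dg lam u) -> size lam < M ->
  count (fun u => P u && (u.1 == j)) (dg lam) = count (fun c => P (j, c)) (index_iota 0 M).
Proof.
move=> PD ltM; rewrite -!sum1_count (big_dg _ _ _ (maxn j (sumn lam)).+1 M) ?ltnS ?leq_maxr //.
rewrite (bigD1_seq j) ?mem_index_iota ?ltnS ?leq_maxl ?iota_uniq //=.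
rewrite [X in _ + X]big1 ?addn0 => [|r rj].
  apply: eq_bigl => c /=; rewrite eqxx andbT.
  by case Pjc: (P (j, c)); rewrite ?andbF // (PD _ Pjc).
by rewrite big_pred0 // => c /=; rewrite (negbTE rj) !andbF.
Qed.

Lemma count_predU_disjoint (T : Type) (a1 a2 : pred T) s :
  (forall x, ~~ (a1 x && a2 x)) -> count (predU a1 a2) s = count a1 s + count a2 s.
Proof.
move=> a12; rewrite -count_predUI [count (predI _ _) _](eq_count (a2 := pred0)).
  by rewrite count_pred0 addn0.
by move=> x /=; apply: negbTE.
Qed.

Definition in_dgk lam (sigma : nat * nat -> nat) k (u : nat * nat) : bool :=
  in_dg lam u && (sigma u == k).

Definition rowk lam sigma k j : pred nat := fun c => in_dgk lam sigma k (j, c).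

Lemma in_dgkW {lam sigma k} (Q : pred nat) u : in_dgk lam sigma k u && Q u.2 -> in_dg lam u.
Proof. by case/andP=> /andP[]. Qed.

Lemma rowk0 lam sigma k : rowk lam sigma k 0 =1 pred0.
Proof. by move=> c; rewrite /rowk /in_dgk /in_dg /= andbF. Qed.

Lemma rowk_gt_sumn lam sigma k j : sumn lam < j -> rowk lam sigma k j =1 pred0.
Proof.
move=> ltj c; rewrite /rowk /in_dgk /in_dg /=.
by rewrite [j <= _]leqNgt (leq_ltn_trans (colh_le_sumn lam c) ltj) !andbF.
Qed.

Lemma up_in_dgk lam sigma k u : in_dgk lam sigma k u ->
  up lam sigma u = arm_count (rowk lam sigma k u.1) (rowk lam sigma k u.1.+1)
                             (index_iota 0 (size lam).+1) u.2.
Proof.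
case: u => j c /andP[_ /eqP sk]; rewrite /up sk.
rewrite (eq_count (a2 := predU
    (fun y => (in_dgk lam sigma k y && (y.2 < c)) && (y.1 == j.+1))
    (fun y => (in_dgk lam sigma k y && (c < y.2)) && (y.1 == j)))); last first.
  move=> [r d]; rewrite /in_uarm /in_dgk /=.
  by move: (in_dg lam (r, d)) (sigma (r, d) == k) (r == j.+1) (d < c) (r == j) (c < d)
    => [] [] [] [] [] [].
rewrite count_predU_disjoint => [|[r d]]; last first.
  by apply/negP=> /andP[/andP[_ /eqP->] /andP[_ /eqP]]; lia.
by rewrite (count_dg_row _ _ _ (size lam).+1 (in_dgkW (fun d => d < c)))
  ?(count_dg_row _ _ _ (size lam).+1 (in_dgkW (fun d => c < d))).
Qed.

Lemma down_in_dgk lam sigma k u : in_dgk lam sigma k u ->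
  down lam sigma u = arm_count (rowk lam sigma k u.1.-1) (rowk lam sigma k u.1)
                               (index_iota 0 (size lam).+1) u.2.
Proof.
case: u => j c /andP[/andP[_ /andP[j1 _]] /eqP sk] /=; rewrite /= in j1; rewrite /down sk.
rewrite (eq_count (a2 := predU
    (fun y => (in_dgk lam sigma k y && (y.2 < c)) && (y.1 == j))
    (fun y => (in_dgk lam sigma k y && (c < y.2)) && (y.1 == j.-1)))); last first.
  move=> [r d]; rewrite /in_arm /in_dgk /=.
  case D: (in_dg lam (r, d)) => //=.
  have r1 : 0 < r by case/andP: D => _ /andP[].
  have -> : (r == j.-1) && (c < d) && (1 < j) = (r == j.-1) && (c < d).
    case: (r =P j.-1) => [rj|] //=; have -> : 1 < j by lia.
    by rewrite andbT.
  by move: (sigma (r, d) == k) (r == j) (d < c) (r == j.-1) (c < d) => [] [] [] [] [].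
rewrite count_predU_disjoint => [|[r d]]; last first.
  by apply/negP=> /andP[/andP[_ /eqP->] /andP[_ /eqP]]; lia.
by rewrite (count_dg_row _ _ _ (size lam).+1 (in_dgkW (fun d => d < c)))
  ?(count_dg_row _ _ _ (size lam).+1 (in_dgkW (fun d => c < d))).
Qed.

Lemma neqN_in_dgk lam sigma k u : in_dgk lam sigma k u ->
  neqN lam sigma u = ~~ in_dgk lam sigma k (u.1.+1, u.2).
Proof.
case: u => r c /andP[/andP[cs /andP[_ rc]] /eqP sk].
by rewrite /neqN /in_dgk /in_dg /= cs sk /= negb_and -leqNgt eqn_leq rc.
Qed.

Lemma neqS_in_dgk lam sigma k u : in_dgk lam sigma k u ->
  neqS sigma u = ~~ in_dgk lam sigma k (u.1.-1, u.2).
Proof.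
case: u => [[|[|r]] c] /andP[/andP[cs /andP[//= _ rc]] /eqP sk].
  by rewrite /neqS /in_dgk /in_dg /= andbF.
by rewrite /neqS /in_dgk /in_dg /= cs sk /= (ltnW rc).
Qed.

Section RowSums.
Variables (R : nzSemiRingType) (lam : seq nat) (sigma : nat * nat -> nat) (k : nat).
Local Notation row := (rowk lam sigma k).
Local Notation cols := (index_iota 0 (size lam).+1).
Local Open Scope ring_scope.

Lemma sum_up_by_rows :
  \sum_(u <- dg lam | (sigma u == k) && neqN lam sigma u) 'X^(up lam sigma u)
  = \sum_(0 <= j < (sumn lam).+2) \sum_(c <- cols | row j c && ~~ row j.+1 c)
      'X^(arm_count (row j) (row j.+1) cols c) :> {poly R}.
Proof.
rewrite (big_dg _ _ _ (sumn lam).+2 (size lam).+1) //; apply: eq_bigr => j _.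
apply: eq_big => c; rewrite andbA -/(in_dgk lam sigma k (j, c)) /rowk.
  by case hk: (in_dgk lam sigma k (j, c)) => //; move: hk => /neqN_in_dgk ->.
by case/andP=> /up_in_dgk ->.
Qed.

Lemma sum_down_by_rows :
  \sum_(u <- dg lam | (sigma u == k) && neqS sigma u) 'X^(down lam sigma u)
  = \sum_(0 <= j < (sumn lam).+2) \sum_(c <- cols | row j c && ~~ row j.-1 c)
      'X^(arm_count (row j.-1) (row j) cols c) :> {poly R}.
Proof.
rewrite (big_dg _ _ _ (sumn lam).+2 (size lam).+1) //; apply: eq_bigr => j _.
apply: eq_big => c; rewrite andbA -/(in_dgk lam sigma k (j, c)) /rowk.
  by case hk: (in_dgk lam sigma k (j, c)) => //; move: hk => /neqS_in_dgk ->.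
by case/andP=> /down_in_dgk ->.
Qed.

End RowSums.

Local Open Scope ring_scope.

Theorem lemma4p2 (lam : seq nat) (sigma : nat * nat -> nat) (k : nat) :
  is_partition lam ->
  (forall u, in_dg lam u -> (0 < sigma u)%N) ->
  (0 < k)%N ->
  \sum_(u <- dg lam | (sigma u == k) && neqN lam sigma u) 'X^(up lam sigma u)
  = \sum_(u <- dg lam | (sigma u == k) && neqS sigma u) 'X^(down lam sigma u)
    :> {poly int}.
Proof.
move=> _ _ _; rewrite sum_up_by_rows sum_down_by_rows.
apply: rows_telescope; first exact: iota_ltn_sorted.
  exact: rowk0.
exact: rowk_gt_sumn.
Qed.
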